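(* Let $X$ be an infinite dimensional separable Banach space and $T:X\to X$ a continuous linear operator such that $(X,T)$ is topologically transitive. Then $(X,T)$ is thickly multi-sensitive: there exists $\delta>0$ such that $\bigcap_{i=1}^kS_T(U_i,\delta)$ is thick for every finite collection of nonempty open sets $U_1,\dots,U_k\subset X$.
   Context: $(X,T)$ is topologically transitive if $\{n\in\mathbb{Z}_+:U\cap T^{-n}V\neq\varnothing\}\neq\varnothing$ for all nonempty open $U,V\subset X$. $S_T(U,\delta)=\{n\in\mathbb{Z}_+:\exists x_1,x_2\in U,\ \|T^nx_1-T^nx_2\|>\delta\}$. A set $F\subset\mathbb{Z}_+$ is thick if it contains arbitrarily long runs of consecutive integers. *)

From HB Require Import structures.
From mathcomp Require Import all_boot all_order all_algebra.
From mathcomp Require Import all_classical all_reals all_analysis.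
Set Implicit Arguments. Unset Strict Implicit. Unset Printing Implicit Defensive.
Import Order.TTheory GRing.Theory Num.Theory.
Import numFieldNormedType.Exports.
Local Open Scope classical_set_scope.
Local Open Scope ring_scope.

Definition infinite_dimensional (R : realType) (X : normedModType R) : Prop :=
  forall s : seq X, exists x : X,
    forall c : nat -> R, x <> \sum_(i < size s) c i *: s`_i.

Definition separable (T : topologicalType) : Prop :=
  exists D : set T, countable D /\ dense D.

Definition top_transitive (X : topologicalType) (T : X -> X) : Prop :=
  forall U V : set X, open U -> U !=set0 -> open V -> V !=set0 ->
    exists n : nat, (U `&` (iter n T) @^-1` V) !=set0.

Definition S_T (R : realType) (X : normedModType R) (T : X -> X)
    (U : set X) (delta : R) : set nat :=
  [set n | exists x1 x2, U x1 /\ U x2 /\ delta < `|iter n T x1 - iter n T x2|].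

Definition thick (F : set nat) : Prop :=
  forall m : nat, exists a : nat, forall j : nat, (j < m)%N -> F (a + j)%N.

Definition thickly_multi_sensitive (R : realType) (X : normedModType R)
    (T : X -> X) : Prop :=
  exists2 delta : R, 0 < delta &
    forall (k : nat) (U : nat -> set X),
      (forall i, (i < k)%N -> open (U i) /\ U i !=set0) ->
      thick [set n | forall i, (i < k)%N -> S_T T (U i) delta n].

From HB Require Import structures.
From mathcomp Require Import all_boot all_order all_algebra.
From mathcomp Require Import all_classical all_reals all_analysis.
From mathcomp Require Import lra zify.
Set Implicit Arguments. Unset Strict Implicit. Unset Printing Implicit Defensive.
Import Order.TTheory GRing.Theory Num.Theory.
Import numFieldNormedType.Exports.
Local Open Scope classical_set_scope.
Local Open Scope ring_scope.

(** Sensitivity with the constant [delta = 1]: every nonempty open set [U_i]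
    contains a ball [x_i + B(0, e)] with [e] independent of [i], so it suffices
    to find one small vector [y], [|y| < e], whose orbit has norm [> 1] on a
    window of [m] consecutive times; then [x_i + y] and [x_i] are separated at
    those times for every [i]. Transitivity sends a point of [B(0, e)] close to
    a vector of huge norm at some time [N]; since [T^l] is uniformly bounded for
    [l <= m], the orbit must already be large on the [m] times preceding [N]. *)

Lemma infinite_dimensional_neq0 (R : realType) (X : normedModType R) :
  infinite_dimensional X -> exists x : X, x != 0.
Proof.
move=> /(_ [::]) [x Hx]; exists x; apply/eqP => x0.
by apply: (Hx (fun=> 0)); rewrite x0 big_ord0.
Qed.

Lemma common_radius (R : realType) (X : normedModType R) (U : nat -> set X) k :
  (forall i, (i < k)%N -> open (U i) /\ U i !=set0) ->
  exists2 e : R, 0 < e & forall i, (i < k)%N ->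
    exists x, forall y, `|y| < e -> U i (x + y).
Proof.
elim: k => [|k IH] HU; first by exists 1.
have [e e0 He] := IH (fun i ik => HU i (ltnW ik)).
have [Uk_open [x Ukx]] := HU k (ltnSn k).
have /nbhs_ballP [d d0 Hd] : nbhs x (U k) by apply: open_nbhs_nbhs.
exists (Num.min e d) => [|i]; first by rewrite lt_min e0 d0.
rewrite ltnS leq_eqVlt => /orP [/eqP ->|ik].
  exists x => y yd; apply: Hd; rewrite -ball_normE /ball_ /= opprD addrA subrr.
  by rewrite sub0r normrN (lt_le_trans yd) // ge_min lexx orbT.
have [z Hz] := He i ik; exists z => y yd; apply: Hz.
by rewrite (lt_le_trans yd) // ge_min lexx.
Qed.

Section IteratedLinearMap.
Variables (R : realType) (X : normedModType R) (T : {linear X -> X}).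

Lemma iter_linearB n (u v : X) : iter n T (u - v) = iter n T u - iter n T v.
Proof. by elim: n => //= n ->; rewrite linearB. Qed.

Lemma iter_uniformly_bounded (m : nat) : continuous T ->
  exists2 C : R, 0 < C &
    forall l (z : X), (l <= m)%N -> `|iter l T z| <= C * `|z|.
Proof.
move=> /(linear_bounded_continuous T).2 /linear_boundedP.
move=> /pinfty_ex_gt0 [r _ Hr].
pose c := Num.max r 1.
have c1 : 1 <= c by rewrite le_max lexx orbT.
have Hc z : `|T z| <= c * `|z|.
  by rewrite (le_trans (Hr z)) // ler_wpM2r // le_max lexx.
exists (c ^+ m) => [|l z lm]; first by rewrite exprn_gt0 // (lt_le_trans ltr01).
apply: (@le_trans _ _ (c ^+ l * `|z|)); last by rewrite ler_wpM2r // ler_weXn2l.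
elim: l {lm} => [|l IH] /=; first by rewrite expr0 mul1r.
by rewrite (le_trans (Hc _)) // exprS -mulrA ler_wpM2l // (le_trans ler01).
Qed.

End IteratedLinearMap.

Section Orbits.
Variables (R : realType) (X : normedModType R) (T : X -> X).

Lemma large_window (C M : R) (m N : nat) (y : X) : 0 < C ->
  (forall l z, (l <= m)%N -> `|iter l T z| <= C * `|z|) ->
  `|y| <= M -> C * M < `|iter N T y| ->
  exists a, forall j, (j < m)%N -> M < `|iter (a + j) T y|.
Proof.
move=> C0 Cb yM large.
have mN : (m <= N)%N.
  rewrite leqNgt; apply/negP => /ltnW /(Cb _ y).
  by have := ler_wpM2l (ltW C0) yM; lra.
exists (N.+1 - m)%N => j jm.
have splitN : N = (N - (N.+1 - m + j) + (N.+1 - m + j))%N by lia.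
have := Cb (N - (N.+1 - m + j))%N (iter (N.+1 - m + j) T y) ltac:(lia).
rewrite -iterD -splitN => Nb.
by rewrite -(ltr_pM2l C0) (lt_le_trans large).
Qed.

Lemma transitive_small_to_large (e K : R) : 0 < e ->
  (exists x : X, x != 0) -> top_transitive T ->
  exists y N, `|y| < e /\ K < `|iter N T y|.
Proof.
move=> e0 [x x0] tr.
pose M := `|K| + 1.
have M0 : 0 < M by rewrite ltr_pwDr.
have nx : 0 < `|x| by rewrite normr_gt0.
pose z := (M / `|x|) *: x.
have nz : `|z| = M by rewrite normrZ ger0_norm ?divfK ?lt0r_neq0 ?divr_ge0 ?ltW.
have [N [y [Hy HNy]]] := tr (ball 0 e) (ball z 1) (@ball_open _ _ 0 e)
  (ex_intro _ 0 (ballxx _ e0)) (@ball_open _ _ z 1) (ex_intro _ z (ballxx _ ltr01)).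
move: Hy HNy; rewrite -!ball_normE /ball_ /= sub0r normrN => ye zN.
exists y, N; split => //.
have := ler_normD (z - iter N T y) (iter N T y); rewrite subrK nz.
by have := ler_norm K; rewrite /M; lra.
Qed.

End Orbits.

Theorem proposition7p2 (R : realType) (X : completeNormedModType R)
  (T : {linear X -> X}) :
  infinite_dimensional X -> separable X -> continuous T ->
  top_transitive T -> thickly_multi_sensitive T.
Proof.
move=> /infinite_dimensional_neq0 X_ntriv _ Tc tr.
exists 1 => [|k U HU m]; first exact: ltr01.
have [e e0 Hballs] := common_radius HU.
have [C C0 Cb] := iter_uniformly_bounded m Tc.
have [y [N [ye large]]] := transitive_small_to_large (C * (e + 1)) e0 X_ntriv tr.
have yM : `|y| <= e + 1 by lra.
have [a Ha] := large_window C0 Cb yM large.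
exists a => j jm i ik.
have [x Hx] := Hballs i ik.
exists (x + y), x; split; first exact: Hx.
split; first by rewrite -[x]addr0; apply: Hx; rewrite normr0.
by rewrite -iter_linearB (addrC x) addrK; have := Ha j jm; lra.
Qed.
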